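(* Let $m>a\geq0$, $n>b\geq0$ be integers. If there exists a regular erasure pattern $\mathcal{E}\subseteq[m]\times[n]$ that is not correctable in $T_{m\times n}(a,b,0)$, then for any non-negative integers $\delta,\gamma$ there exists a regular erasure pattern $\mathcal{E}'\subseteq[m+\delta]\times[n+\gamma]$ that is not correctable in $T_{(m+\delta)\times(n+\gamma)}(a+\delta,b+\gamma,0)$.
   Context: Positions of vectors in $\mathbb{F}^{mn}$ are identified with $[m]\times[n]$, $[k]=\{1,\dots,k\}$. For linear codes $\mathcal{C}_1\subseteq\mathbb{F}^m,\mathcal{C}_2\subseteq\mathbb{F}^n$, $\mathcal{C}_1\otimes\mathcal{C}_2$ is the row span of the Kronecker product of their generator matrices. A code for the topology $T_{m\times n}(a,b,0)$ is a linear code over a finite field $\mathbb{F}$ whose parity-check matrix is a parity-check matrix of $\mathcal{C}_{\mathsf{col}}\otimes\mathcal{C}_{\mathsf{row}}$, where $\mathcal{C}_{\mathsf{col}}$ is a linear $[m,\geq m-a]$ code and $\mathcal{C}_{\mathsf{row}}$ a linear $[n,\geq n-b]$ code over $\mathbb{F}$; $\mathbb{C}_{m\times n}(a,b,0)$ is the set of these codes (over any finite field). A code corrects an erasure pattern $\mathcal{E}$ if no two distinct codewords agree on all positions outside $\mathcal{E}$; $\mathcal{E}$ is correctable in $T_{m\times n}(a,b,0)$ if some code in $\mathbb{C}_{m\times n}(a,b,0)$ corrects it. An erasure pattern $\mathcal{E}\subseteq[m]\times[n]$ is regular (for $T_{m\times n}(a,b,0)$) if for all $\mathcal{U}\subseteq[m]$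 with $|\mathcal{U}|=u\geq a$ and all $\mathcal{V}\subseteq[n]$ with $|\mathcal{V}|=v\geq b$ one has $|\mathcal{E}\cap(\mathcal{U}\times\mathcal{V})|\leq va+ub-ab$. *)

From HB Require Import structures.
From mathcomp Require Import all_boot all_order all_algebra all_field.
Set Implicit Arguments. Unset Strict Implicit. Unset Printing Implicit Defensive.
Import GRing.Theory.
Local Open Scope ring_scope.

(* Codewords of a code in F^{mn} are represented as m x n matrices, position
   (i,j) in [m] x [n].  For generator matrices G1 (of C_col, length m) and
   G2 (of C_row, length n), the rows of the Kronecker product G1 (x) G2 are the
   outer products g1^T g2, so C_col (x) C_row = { G1^T M G2 }. *)
Definition tensor_code (F : fieldType) (m n k1 k2 : nat)
  (G1 : 'M[F]_(k1, m)) (G2 : 'M[F]_(k2, n)) (X : 'M[F]_(m, n)) : Prop :=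
  exists M : 'M[F]_(k1, k2), X = G1^T *m M *m G2.

Definition corrects (F : fieldType) (m n : nat) (C : 'M[F]_(m, n) -> Prop)
  (E : {set 'I_m * 'I_n}) : Prop :=
  forall X Y, C X -> C Y ->
    (forall (i : 'I_m) (j : 'I_n), (i, j) \notin E -> X i j = Y i j) -> X = Y.

Definition correctable (m n a b : nat) (E : {set 'I_m * 'I_n}) : Prop :=
  exists (F : finFieldType) (k1 k2 : nat)
         (G1 : 'M[F]_(k1, m)) (G2 : 'M[F]_(k2, n)),
    [/\ (m - a <= \rank G1)%N, (n - b <= \rank G2)%N
      & corrects (tensor_code G1 G2) E].

(* Regular erasure pattern.  Note: u >= a so u*b >= a*b and the truncated
   subtraction below is exact. *)
Definition regular (m n a b : nat) (E : {set 'I_m * 'I_n}) : Prop :=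
  forall (U : {set 'I_m}) (V : {set 'I_n}),
    (a <= #|U|)%N -> (b <= #|V|)%N ->
    (#|E :&: setX U V| <= #|V| * a + #|U| * b - a * b)%N.

From HB Require Import structures.
From mathcomp Require Import all_boot all_order all_algebra all_field.
From mathcomp Require Import zify.
Set Implicit Arguments. Unset Strict Implicit. Unset Printing Implicit Defensive.

(* Pad E by erasing every position outside the top-left m x n block.

   Regularity says that every U x V with |U| >= a, |V| >= b contains at least
   (|U| - a)(|V| - b) unerased positions.  The unerased positions of U' x V' are
   those of U x V, where U, V are the traces of U', V' on the block, and
   |U'| - (a + d) <= |U| - a, |V'| - (b + g) <= |V| - b; so padding preserves
   regularity.

   If C1' (x) C2' corrected the padded pattern, then a nonzero codeword of C1'
   vanishing on the first m coordinates, tensored with a nonzero codeword of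
   C2', would be a nonzero codeword supported on erased positions.  Hence
   puncturing C1' and C2' to the first m and n coordinates keeps their
   dimensions, and the punctured product code corrects E. *)


Section Padding.

Variables (m n d g : nat).

Definition corner_pos (p : 'I_m * 'I_n) : 'I_(m + d) * 'I_(n + g) :=
  (lshift d p.1, lshift g p.2).

Definition pad_erasures (E : {set 'I_m * 'I_n}) : {set 'I_(m + d) * 'I_(n + g)} :=
  ~: (corner_pos @: ~: E).

Lemma corner_pos_inj : injective corner_pos.
Proof. by move=> [i j] [i' j'] [/val_inj-> /val_inj->]. Qed.

Lemma mem_pad_corner E p : (corner_pos p \in pad_erasures E) = (p \in E).
Proof. by rewrite inE mem_imset ?inE ?negbK //; exact: corner_pos_inj. Qed.

Lemma pad_erasuresPn E x :
  x \notin pad_erasures E -> exists2 p, x = corner_pos p & p \notin E.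
Proof. by rewrite inE negbK => /imsetP[p]; rewrite inE => Ep ->; exists p. Qed.

Lemma card_lshift_preim (U : {set 'I_(m + d)}) : #|U| <= #|lshift d @^-1: U| + d.
Proof.
set L := lshift d @: (lshift d @^-1: U); set R := @rshift m d @: [set: 'I_d].
have sub : U \subset L :|: R.
  apply/subsetP => x; rewrite in_setU; case: (split_ordP x) => [i -> Ui | k -> _].
    by rewrite mem_imset ?inE ?Ui //; exact: lshift_inj.
  by rewrite mem_imset ?inE ?orbT //; exact: rshift_inj.
rewrite (leq_trans (subset_leq_card sub)) // (leq_trans (leq_card_setU L R)) //.
by rewrite leq_add ?leq_imset_card // (leq_trans (leq_imset_card _ _)) // cardsT card_ord.
Qed.

Lemma card_pad_setX E (U : {set 'I_(m + d)}) (V : {set 'I_(n + g)}) :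
  #|pad_erasures E :&: setX U V| + #|lshift d @^-1: U| * #|lshift g @^-1: V|
  <= #|E :&: setX (lshift d @^-1: U) (lshift g @^-1: V)| + #|U| * #|V|.
Proof.
set U0 := lshift d @^-1: U; set V0 := lshift g @^-1: V; set C := corner_pos @: setX U0 V0.
have sub_corner : C \subset setX U V.
  by apply/subsetP => _ /imsetP[[i j] + ->]; rewrite !inE.
have sub_pad : pad_erasures E :&: setX U V \subset
    corner_pos @: (E :&: setX U0 V0) :|: (setX U V :\: C).
  apply/subsetP => x; rewrite in_setI => /andP[Ex UVx].
  rewrite in_setU in_setD UVx andbT orbC.
  case: (boolP (x \in C)) => //= /imsetP[p UVp Dx]; rewrite Dx mem_pad_corner in Ex.
  by rewrite Dx mem_imset ?in_setI ?Ex //; exact: corner_pos_inj.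
have card_C : #|C| = #|U0| * #|V0| by rewrite card_imset ?cardsX //; exact: corner_pos_inj.
rewrite -card_C -cardsX -(cardsID C (setX U V)) (setIidPr sub_corner).
rewrite addnCA addnC leq_add2l (leq_trans (subset_leq_card sub_pad)) //.
by rewrite (leq_trans (leq_card_setU _ _)) // leq_add2r leq_imset_card.
Qed.

End Padding.

Lemma leq_regular_bound a b u v x : a <= u -> b <= v ->
  (x <= v * a + u * b - a * b) = (x + (u - a) * (v - b) <= u * v).
Proof.
move=> /subnKC <- /subnKC <-; move: (u - a) (v - b) => p q.
by apply/idP/idP; nia.
Qed.

Lemma regularE m n a b (E : {set 'I_m * 'I_n}) :
  regular a b E <-> forall (U : {set 'I_m}) (V : {set 'I_n}),
    a <= #|U| -> b <= #|V| ->
    #|E :&: setX U V| + (#|U| - a) * (#|V| - b) <= #|U| * #|V|.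
Proof.
split=> regE U V leU leV; have := regE U V leU leV; by rewrite leq_regular_bound.
Qed.

Lemma regular_pad m n a b d g (E : {set 'I_m * 'I_n}) :
  regular a b E -> regular (a + d) (b + g) (pad_erasures d g E).
Proof.
move/regularE=> regE; apply/regularE => U V leU leV.
set U0 := lshift d @^-1: U; set V0 := lshift g @^-1: V.
have card_pad : #|pad_erasures d g E :&: setX U V| + #|U0| * #|V0|
    <= #|E :&: setX U0 V0| + #|U| * #|V| := card_pad_setX E U V.
have leU0 : #|U| <= #|U0| + d := card_lshift_preim U.
have leV0 : #|V| <= #|V0| + g := card_lshift_preim V.
have le_a_U0 : a <= #|U0| by lia.
have le_b_V0 : b <= #|V0| by lia.
have regUV0 := regE U0 V0 le_a_U0 le_b_V0.
have : (#|U| - (a + d)) * (#|V| - (b + g)) <= (#|U0| - a) * (#|V0| - b).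
  by apply: leq_mul; lia.
move: card_pad regUV0; set P := _ * (_ - b); set P' := _ * (_ - (b + g)).
set uv := #|U| * #|V|; set uv0 := #|U0| * #|V0|.
set e := #|pad_erasures _ _ _ :&: _|; set e0 := #|E :&: _|; lia.
Qed.

Import GRing.Theory.
Local Open Scope ring_scope.

Lemma mxrank_mul_injective (F : fieldType) k p q (A : 'M[F]_(k, p)) (f : 'M_(p, q)) :
  (forall w : 'rV_k, w *m A *m f = 0 -> w *m A = 0) -> \rank (A *m f) = \rank A.
Proof.
move=> injf; apply/mxrank_injP/rowV0P => v.
by rewrite sub_capmx => /andP[/submxP[w ->] /sub_kermxP]; exact: injf.
Qed.

Lemma mxrank_lsubmx_eq (F : fieldType) k p1 p2 (A : 'M[F]_(k, p1 + p2)) :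
  (forall w : 'rV_k, w *m lsubmx A = 0 -> w *m A = 0) -> \rank (lsubmx A) = \rank A.
Proof.
have lsubE r (B : 'M[F]_(r, p1 + p2)) : lsubmx B = B *m lsubmx 1%:M.
  by rewrite mulmx_lsub mulmx1.
move=> inj_lsub; rewrite lsubE; apply: mxrank_mul_injective => w.
by rewrite -lsubE -mulmx_lsub; exact: inj_lsub.
Qed.

Section TensorCode.

Variables (F : fieldType) (k1 k2 m n : nat) (G1 : 'M[F]_(k1, m)) (G2 : 'M[F]_(k2, n)).

Lemma tensor_code_outer (u : 'rV_k1) (v : 'rV_k2) :
  tensor_code G1 G2 ((u *m G1)^T *m (v *m G2)).
Proof. by exists (u^T *m v); rewrite trmx_mul !mulmxA. Qed.

Lemma corrects_outer E (u : 'rV_k1) (v : 'rV_k2) :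
  corrects (tensor_code G1 G2) E ->
  (forall i j, (i, j) \notin E -> (u *m G1) 0 i * (v *m G2) 0 j = 0) ->
  u *m G1 = 0 \/ v *m G2 = 0.
Proof.
move=> corrE outside_E.
have outer_entry i j : ((u *m G1)^T *m (v *m G2)) i j = (u *m G1) 0 i * (v *m G2) 0 j.
  by rewrite mxE big_ord1 mxE; exact: erefl.
have outer0 : (u *m G1)^T *m (v *m G2) = 0.
  apply: corrE (tensor_code_outer u v) _ _ => [|i j /outside_E uv0].
    by exists 0; rewrite mulmx0 mul0mx.
  by rewrite outer_entry uv0 mxE.
case: (eqVneq (u *m G1) 0) => [|/rV0Pn[i nz_ui]]; first by left.
case: (eqVneq (v *m G2) 0) => [|/rV0Pn[j nz_vj]]; first by right.
suff : (u *m G1)^T *m (v *m G2) != 0 by rewrite outer0 eqxx.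
by apply/matrix0Pn; exists i, j; rewrite outer_entry mulf_neq0.
Qed.

End TensorCode.

Section Puncturing.

Variables (F : fieldType) (k1 k2 m n d g : nat).
Variables (G1 : 'M[F]_(k1, m + d)) (G2 : 'M[F]_(k2, n + g)) (E : {set 'I_m * 'I_n}).
Hypothesis corrE : corrects (tensor_code G1 G2) (pad_erasures d g E).

Lemma mxrank_lsubmx_padl : G2 != 0 -> \rank (lsubmx G1) = \rank G1.
Proof.
move=> /rowV0Pn[_ /submxP[v ->] nz_v]; apply: mxrank_lsubmx_eq => w w0.
have outside x y : (x, y) \notin pad_erasures d g E ->
    (w *m G1) 0 x * (v *m G2) 0 y = 0.
  case/pad_erasuresPn=> [[i j] [-> ->] _].
  have -> : (w *m G1) 0 (lshift d i) = (w *m lsubmx G1) 0 i by rewrite mulmx_lsub [RHS]mxE.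
  by rewrite w0 [_ 0 i]mxE mul0r.
by case: (corrects_outer corrE outside) => // vG2_0; rewrite vG2_0 eqxx in nz_v.
Qed.

Lemma mxrank_lsubmx_padr : G1 != 0 -> \rank (lsubmx G2) = \rank G2.
Proof.
move=> /rowV0Pn[_ /submxP[u ->] nz_u]; apply: mxrank_lsubmx_eq => w w0.
have outside x y : (x, y) \notin pad_erasures d g E ->
    (u *m G1) 0 x * (w *m G2) 0 y = 0.
  case/pad_erasuresPn=> [[i j] [-> ->] _].
  have -> : (w *m G2) 0 (lshift g j) = (w *m lsubmx G2) 0 j by rewrite mulmx_lsub [RHS]mxE.
  by rewrite w0 [_ 0 j]mxE mulr0.
by case: (corrects_outer corrE outside) => // uG1_0; rewrite uG1_0 eqxx in nz_u.
Qed.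

Lemma corrects_lsubmx : corrects (tensor_code (lsubmx G1) (lsubmx G2)) E.
Proof.
have ulsubE M : (lsubmx G1)^T *m M *m lsubmx G2 = ulsubmx (G1^T *m M *m G2).
  by rewrite trmx_lsub mul_usub_mx mulmx_lsub mul_usub_mx.
move=> _ _ [M ->] [N ->] agree; rewrite !ulsubE; congr ulsubmx.
apply: corrE; [by exists M | by exists N | move=> _ _ /pad_erasuresPn[[i j] [-> ->]]].
by move/agree; rewrite !ulsubE !mxE.
Qed.

End Puncturing.

Theorem lemma7 (m n a b : nat) :
  (a < m)%N -> (b < n)%N ->
  (exists E : {set 'I_m * 'I_n}, regular a b E /\ ~ correctable a b E) ->
  forall delta gamma : nat,
    exists E' : {set 'I_(m + delta) * 'I_(n + gamma)},
      regular (a + delta) (b + gamma) E' /\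
      ~ correctable (a + delta) (b + gamma) E'.
Proof.
move=> lt_am lt_bn [E [regE not_corrE]] d g.
exists (pad_erasures d g E); split; first exact: regular_pad.
case=> F [k1 [k2 [G1 [G2 [rkG1 rkG2 corrE]]]]].
have nzG1 : G1 != 0 by apply: contraTneq rkG1 => ->; rewrite mxrank0; lia.
have nzG2 : G2 != 0 by apply: contraTneq rkG2 => ->; rewrite mxrank0; lia.
apply: not_corrE; exists F, k1, k2, (lsubmx G1), (lsubmx G2); split.
- by rewrite (mxrank_lsubmx_padl corrE nzG2); lia.
- by rewrite (mxrank_lsubmx_padr corrE nzG1); lia.
- exact: corrects_lsubmx.
Qed.
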